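(* Let $n\ge1$ and $A=(A_1,\dots,A_n)\in V_n$. The following are equivalent: (i) $A$ is stable; (ii) there exist $1\le j,k,l\le n$ such that $(A_j,A_k,A_l)\in V_3$ is stable; (iii) there exist $1\le j,k,l\le n$ such that $\sigma_{jk}(A)\neq0$ or $\Delta_{jkl}(A)\neq0$; (iv) $A$ is not similar to an upper triangular $n$-matrix; (v) there is no proper nonzero subspace of $\mathbb{C}^2$ preserved by all of $A_1,\dots,A_n$.
   Context: $V_n=(M_{2\times2}(\mathbb{C}))^{\times n}$ with $SL(2,\mathbb{C})$ acting by simultaneous conjugation; a point is stable if its orbit map $g\mapsto g\cdot x$ from $SL(2,\mathbb{C})$ is proper. Similar means in the same $GL(2,\mathbb{C})$-orbit under simultaneous conjugation; an upper triangular $n$-matrix has all components upper triangular. With $t_j=\mathsf{tr}(A_j)$, $t_{jk}=\mathsf{tr}(A_jA_k)$, $t_{jkl}=\mathsf{tr}(A_jA_kA_l)$, define $\tau_{jk}=t_{jk}-\tfrac12t_jt_k$, $\sigma_{jk}=\tau_{jk}^2-\tau_{jj}\tau_{kk}$ and $\Delta_{jkl}=(t_{jkl}-t_{lkj})^2$. *)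

From HB Require Import structures.
From mathcomp Require Import all_boot all_order all_algebra.
From mathcomp Require Import all_classical all_reals.
From mathcomp Require Import topology normedtype.
From mathcomp Require Import complex.
Set Implicit Arguments. Unset Strict Implicit. Unset Printing Implicit Defensive.
Import Order.TTheory GRing.Theory Num.Theory.
Local Open Scope ring_scope.
Local Open Scope classical_set_scope.

(* The complex numbers: C = R[i] for R : realType (R is a model of the reals),
   with its usual metric topology (from the norm |z|), declared exactly as
   MathComp-Analysis does for realType / rcfType (num_topology.v). *)
HB.instance Definition _ (R : realType) := PseudoPointedMetric.copy R[i] R[i]^o.

(* V_n = (M_2(C))^n, as functions 'I_n -> 'M_2, with the product topology
   (M_2(C) carries the entrywise = norm topology). *)
Notation Vn R n := {ptws 'I_n -> 'M[R[i]]_2} (only parsing).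

Definition SL2 (R : realType) : set 'M[R[i]]_2 := [set g | \det g = 1].
Arguments SL2 R : clear implicits.

Definition conj_actV (R : realType) (n : nat) (g : 'M[R[i]]_2) (A : Vn R n)
  : Vn R n := fun i => g *m A i *m invmx g.

(* x is stableV iff the orbit map SL(2,C) -> V_n, g |-> g.x, is proper:
   preimages of compact sets are compact (SL(2,C) is closed in M_2(C), so
   compactness in SL(2,C) is compactness in M_2(C) of a subset of SL2). *)
Definition stableV (R : realType) (n : nat) (A : Vn R n) : Prop :=
  forall K : set (Vn R n), compact K ->
    compact (SL2 R `&` (fun g => conj_actV g A) @^-1` K).

Definition similarV (R : realType) (n : nat) (A B : Vn R n) : Prop :=
  exists2 P : 'M[R[i]]_2, P \in unitmx & conj_actV P A = B.

(* upper triangular 2x2 matrix: the (2,1) entry vanishes *)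
Definition upper_tri2V (R : realType) (M : 'M[R[i]]_2) : Prop :=
  M (lift ord0 ord0) ord0 = 0.

Definition upper_tri_tupleV (R : realType) (n : nat) (B : Vn R n) : Prop :=
  forall i, upper_tri2V (B i).

Definition tripleV (R : realType) (a b c : 'M[R[i]]_2) : Vn R 3 :=
  fun i => tnth [tuple a; b; c] i.

Section Traces.
Variables (R : realType) (n : nat) (A : Vn R n).
Definition t1V (j : 'I_n) : R[i] := \tr (A j).
Definition t2V (j k : 'I_n) : R[i] := \tr (A j *m A k).
Definition t3V (j k l : 'I_n) : R[i] := \tr (A j *m A k *m A l).
Definition tauV (j k : 'I_n) : R[i] := t2V j k - 2^-1 * t1V j * t1V k.
Definition sigmaV (j k : 'I_n) : R[i] := tauV j k ^+ 2 - tauV j j * tauV k k.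
Definition DeltaV (j k l : 'I_n) : R[i] := (t3V j k l - t3V l k j) ^+ 2.
End Traces.

(* W (a 2x2 matrix whose rows span a subspace of C^2, vectors viewed as
   columns) is preserved by M : M w in span W for w in span W, i.e. the row
   space of W is stableV under right multiplication by M^T. *)
Definition preservesV (R : realType) (M W : 'M[R[i]]_2) : Prop :=
  (W *m M^T <= W)%MS.

(* All five conditions say that A_1, ..., A_n have no common eigenvector.  For (iii), triangularize one
   non-scalar A_j; then sigma_jk and Delta_jkl measure how far the two
   eigenvectors of A_j are from being eigenvectors of the other A_k.  A
   nonvanishing invariant involves only three of the matrices, whence (ii).
   If there is a common eigenvector, conjugate to upper triangular form by P;
   then g_s = P^-1 diag(s, 1/s) P keeps g_s . A bounded as s -> 0 while g_s
   escapes to infinity, so the orbit map is not proper.  Otherwise some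
   triple P1, P2, P3 among the A_j and their commutators has
   tr(P1 P2 P3) <> tr(P3 P2 P1), so that 1, P1, P2, P3 span M_2(C): bounds on
   g P_k g^-1 then bound every g E g^-1, and for E a matrix unit these
   contain the squares of the entries of g. *)

From HB Require Import structures.
From mathcomp Require Import all_boot all_order all_algebra.
From mathcomp Require Import all_classical all_reals.
From mathcomp Require Import topology normedtype.
From mathcomp Require Import complex.
From mathcomp Require Import ring.
Import Order.TTheory GRing.Theory Num.Theory.
Import numFieldTopology.Exports.
Local Open Scope ring_scope.
Local Open Scope classical_set_scope.
Set Implicit Arguments. Unset Strict Implicit. Unset Printing Implicit Defensive.

Section Matrix2.
Variable F : comNzRingType.
Implicit Types M N : 'M[F]_2.

Lemma ord2P (i : 'I_2) : i = 0 \/ i = 1.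
Proof. by case: i => [[|[|//]]] Hi; [left|right]; apply/val_inj. Qed.

Lemma big_ord2 (f : 'I_2 -> F) : \sum_(i < 2) f i = f 0 + f 1.
Proof. by rewrite big_ord_recr big_ord1; congr (f _ + f _); apply/val_inj. Qed.

Lemma mulmx2E m n (M : 'M[F]_(m, 2)) (N : 'M[F]_(2, n)) i j :
  (M *m N) i j = M i 0 * N 0 j + M i 1 * N 1 j.
Proof. by rewrite mxE big_ord2. Qed.

Lemma mxtrace2 M : \tr M = M 0 0 + M 1 1.
Proof. exact: big_ord2. Qed.

Lemma lift_ord2 (i : 'I_2) (j : 'I_1) : lift i j = if i == 0 then 1 else 0.
Proof. by case: (ord2P i) => ->; apply/val_inj; rewrite /= ?ord1. Qed.

Lemma det_mx2 M : \det M = M 0 0 * M 1 1 - M 0 1 * M 1 0.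
Proof.
rewrite (expand_det_row _ 0) big_ord2 /cofactor !det_mx11 !mxE !lift_ord2 /=.
by rewrite expr0 expr1; ring.
Qed.

Lemma adj_mx2 M i j : \adj M i j =
  if i == 0 then (if j == 0 then M 1 1 else - M 0 1)
  else (if j == 0 then - M 1 0 else M 0 0).
Proof.
rewrite mxE /cofactor det_mx11 !mxE !lift_ord2.
case: (ord2P i) => ->; case: (ord2P j) => -> /=.
- by rewrite expr0 mul1r.
- by rewrite expr1 mulN1r.
- by rewrite expr1 mulN1r.
- by rewrite sqrrN expr1n mul1r.
Qed.

End Matrix2.

Section CommonEigenvector.
Variable F : fieldType.
Implicit Types (M P : 'M[F]_2) (u v : 'cV[F]_2).

Definition common_eigenvector n (A : 'I_n -> 'M[F]_2) :=
  exists2 u : 'cV[F]_2, u != 0 & forall i, exists l, A i *m u = l *: u.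

Definition col2 (x y : F) : 'cV[F]_2 := \col_i (if i == 0 then x else y).

Lemma cV2_ext u v : u 0 0 = v 0 0 -> u 1 0 = v 1 0 -> u = v.
Proof.
by move=> h0 h1; apply/matrixP => i j; rewrite (ord1 j); case: (ord2P i) => ->.
Qed.

Lemma col2_eq0 x y : (col2 x y == 0) = (x == 0) && (y == 0).
Proof.
apply/eqP/andP => [/matrixP h | [/eqP-> /eqP->]].
  by have := h 0 0; have := h 1 0; rewrite !mxE /= => -> ->.
by apply: cV2_ext; rewrite !mxE.
Qed.

Lemma cV2_neq0 u : u != 0 -> u 0 0 != 0 \/ u 1 0 != 0.
Proof.
move=> un; case: (eqVneq (u 0 0) 0) => h0; last by left.
by right; apply: contra un => /eqP h1; apply/eqP/cV2_ext; rewrite mxE.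
Qed.

Definition eigen_cross M u : F := (M *m u) 0 0 * u 1 0 - (M *m u) 1 0 * u 0 0.

Lemma eigenvector_cross M u : u != 0 -> eigen_cross M u = 0 ->
  exists l, M *m u = l *: u.
Proof.
move=> /cV2_neq0 [h0|h1] /eqP; rewrite subr_eq0 => /eqP hc.
- exists ((M *m u) 0 0 / u 0 0); apply: cV2_ext; rewrite [RHS]mxE; first by field.
  by rewrite mulrAC hc; field.
- exists ((M *m u) 1 0 / u 1 0); apply: cV2_ext; rewrite [RHS]mxE; last by field.
  by rewrite mulrAC -hc; field.
Qed.

Definition e0 : 'cV[F]_2 := col2 1 0.

Lemma e0_neq0 : e0 != 0.
Proof. by rewrite col2_eq0 oner_eq0. Qed.

Lemma mul_mx_e0 M i : (M *m e0) i 0 = M i 0.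
Proof. by rewrite mulmx2E !mxE /=; ring. Qed.

Lemma common_eigenvector_lower0 n (A : 'I_n -> 'M[F]_2) :
  (forall i, A i 1 0 = 0) -> common_eigenvector A.
Proof.
move=> hA; exists e0 => [|i]; first exact: e0_neq0.
by exists (A i 0 0); apply: cV2_ext; rewrite mul_mx_e0 !mxE /= ?hA ?mulr1 ?mulr0.
Qed.

(* An invertible matrix whose first column is the nonzero vector [u]. *)
Definition frame_mx u : 'M[F]_2 := \matrix_(i, j)
  if j == 0 then u i 0 else
  if u 0 0 == 0 then (if i == 0 then 1 else 0) else (if i == 0 then 0 else 1).

Lemma frame_mx_unit u : u != 0 -> frame_mx u \in unitmx.
Proof.
move=> un; rewrite unitmxE unitfE det_mx2 !mxE /=.
case: (eqVneq (u 0 0) 0) => h0 /=; last by rewrite mulr1 mul0r subr0.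
have [|h1] := cV2_neq0 un; first by rewrite h0 eqxx.
by rewrite h0 mul0r sub0r mul1r oppr_eq0.
Qed.

Lemma frame_mx_e0 u : frame_mx u *m e0 = u.
Proof. by apply: cV2_ext; rewrite mul_mx_e0 mxE. Qed.

Lemma frame_mx_conj_lower0 M u l : u != 0 -> M *m u = l *: u ->
  (invmx (frame_mx u) *m M *m frame_mx u) 1 0 = 0.
Proof.
move=> un hM; have hQ := frame_mx_unit un.
have : invmx (frame_mx u) *m M *m frame_mx u *m e0 = l *: e0.
  rewrite -!mulmxA frame_mx_e0 hM -scalemxAr -{2}(frame_mx_e0 u) mulmxA.
  by rewrite mulVmx // mul1mx.
by move/matrixP/(_ 1 0); rewrite mul_mx_e0 => ->; rewrite !mxE mulr0.
Qed.

Lemma common_eigenvector_conj n (A : 'I_n -> 'M[F]_2) P : P \in unitmx ->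
  common_eigenvector (fun i => P *m A i *m invmx P) -> common_eigenvector A.
Proof.
move=> hP [u un hu]; exists (invmx P *m u) => [|i].
  by apply: contra un => /eqP h; rewrite -(mulKVmx hP u) h mulmx0.
have [l hl] := hu i; exists l.
by have := congr1 (mulmx (invmx P)) hl; rewrite -!mulmxA mulKmx // -scalemxAr.
Qed.

Lemma common_eigenvector_triangularizable n (A : 'I_n -> 'M[F]_2) :
  common_eigenvector A <->
  exists2 P, P \in unitmx & forall i, (P *m A i *m invmx P) 1 0 = 0.
Proof.
split=> [[u un hu] | [P hP hA]].
  exists (invmx (frame_mx u)) => [|i]; first by rewrite unitmx_inv frame_mx_unit.
  by have [l hl] := hu i; rewrite invmxK (frame_mx_conj_lower0 un hl).
exact: common_eigenvector_conj hP (common_eigenvector_lower0 hA).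
Qed.

Lemma invariant_line_common_eigenvector n (A : 'I_n -> 'M[F]_2) :
  (exists W : 'M[F]_2,
     [/\ (0 < \rank W)%N, (\rank W < 2)%N & forall i, (W *m (A i)^T <= W)%MS])
  <-> common_eigenvector A.
Proof.
split=> [[W [W_gt0 W_lt2 hW]] | [u un hu]].
  pose w := nz_row W.
  have wn0 : w != 0 by rewrite nz_row_eq0 -mxrank_eq0 -lt0n.
  have rW : \rank W = 1%N by apply/eqP; rewrite eqn_leq -ltnS W_lt2.
  have rw : \rank w = 1%N.
    by apply/eqP; rewrite eqn_leq rank_leq_row lt0n mxrank_eq0.
  have wW : (w :=: W)%MS.
    by apply/eqmxP; rewrite -(mxrank_leqif_sup (nz_row_sub W)).2 rw rW andbT nz_row_sub.
  exists w^T => [|i]; first by rewrite -trmx0 (inj_eq trmx_inj).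
  have /sub_rVP[a ha] : (w *m (A i)^T <= w)%MS.
    by apply: submx_trans (submxMr _ (nz_row_sub W)) _; rewrite wW.
  by exists a; rewrite -[A i]trmxK -trmx_mul ha linearZ.
pose W : 'M[F]_2 := const_mx 1 *m u^T.
have Wn0 : W != 0.
  apply: contra un => /eqP/matrixP hW; apply/eqP/cV2_ext.
    by have := hW 0 0; rewrite !mxE big_ord1 !mxE mul1r.
  by have := hW 0 1; rewrite !mxE big_ord1 !mxE mul1r.
exists W; split=> [||i]; first by rewrite lt0n mxrank_eq0.
  by apply: leq_ltn_trans (mxrankM_maxl _ _) _; apply: leq_ltn_trans (rank_leq_col _) _.
have [l hl] := hu i.
by rewrite /W -mulmxA -trmx_mul hl linearZ /= -scalemxAr scalemx_sub.
Qed.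

End CommonEigenvector.

Lemma eigenvector_exists (F : closedFieldType) (n : nat) (M : 'M[F]_n.+1) :
  exists2 u : 'cV[F]_n.+1, u != 0 & exists l, M *m u = l *: u.
Proof.
have /closed_rootP[a] : size (char_poly M^T) != 1%N by rewrite size_char_poly.
rewrite -eigenvalue_root_char => /eigenvalueP[v hv vn0].
exists v^T; first by rewrite -trmx0 (inj_eq trmx_inj).
by exists a; rewrite -[M]trmxK -trmx_mul hv linearZ.
Qed.

Section TraceInvariants.
Variable F : numClosedFieldType.
Implicit Types X Y Z M P : 'M[F]_2.

Definition tau_mx X Y : F := \tr (X *m Y) - 2^-1 * \tr X * \tr Y.
Definition sigma_mx X Y : F := tau_mx X Y ^+ 2 - tau_mx X X * tau_mx Y Y.
Definition skew_tr X Y Z : F := \tr (X *m Y *m Z) - \tr (Z *m Y *m X).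

Lemma conj_mulmx P X Y : P \in unitmx ->
  (P *m X *m invmx P) *m (P *m Y *m invmx P) = P *m (X *m Y) *m invmx P.
Proof. by move=> hP; rewrite -!mulmxA (mulmxA (invmx P)) mulVmx // mul1mx. Qed.

Lemma mxtrace_conj P X : P \in unitmx -> \tr (P *m X *m invmx P) = \tr X.
Proof. by move=> hP; rewrite mxtrace_mulC mulmxA mulVmx // mul1mx. Qed.

Lemma sigma_mx_conj P X Y : P \in unitmx ->
  sigma_mx (P *m X *m invmx P) (P *m Y *m invmx P) = sigma_mx X Y.
Proof. by move=> hP; rewrite /sigma_mx /tau_mx !conj_mulmx // !mxtrace_conj. Qed.

Lemma skew_tr_conj P X Y Z : P \in unitmx ->
  skew_tr (P *m X *m invmx P) (P *m Y *m invmx P) (P *m Z *m invmx P) =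
  skew_tr X Y Z.
Proof. by move=> hP; rewrite /skew_tr !conj_mulmx // !mxtrace_conj. Qed.

Lemma skew_tr_commutator X Y : skew_tr X Y (X *m Y - Y *m X) = 2 * sigma_mx X Y.
Proof.
rewrite /skew_tr /sigma_mx /tau_mx !mxtrace2 !mulmx2E !mxE !big_ord2.
by field.
Qed.

(* When [skew_tr P1 P2 P3 != 0], this expands [E] in the basis
   [1, P1, P2, P3] of 2x2 matrices, with coefficients given by traces. *)
Lemma skew_tr_expansion P1 P2 P3 E :
  (2 * skew_tr P1 P2 P3) *: E =
    (skew_tr P1 P2 P3 * \tr E - \tr (E *m (P2 *m P3 - P3 *m P2)) * \tr P1
     - \tr (E *m (P3 *m P1 - P1 *m P3)) * \tr P2
     - \tr (E *m (P1 *m P2 - P2 *m P1)) * \tr P3) *: 1%:M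
  + (2 * \tr (E *m (P2 *m P3 - P3 *m P2))) *: P1
  + (2 * \tr (E *m (P3 *m P1 - P1 *m P3))) *: P2
  + (2 * \tr (E *m (P1 *m P2 - P2 *m P1))) *: P3.
Proof.
apply/matrixP => i j; rewrite /skew_tr !mxtrace2 !mulmx2E !mxE !big_ord2.
by case: (ord2P i) => ->; case: (ord2P j) => -> /=; ring.
Qed.

(* For [X] upper triangular, [upper_eigvec X] is an eigenvector of [X]. *)
Definition upper_eigvec X : 'cV[F]_2 := col2 (X 0 1) (X 1 1 - X 0 0).

Lemma upper_eigvec_neq0 X : X 1 0 = 0 -> ~~ is_scalar_mx X -> upper_eigvec X != 0.
Proof.
move=> X10; apply: contraNN; rewrite col2_eq0 subr_eq0 => /andP[/eqP X01 /eqP X11].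
apply/is_scalar_mxP; exists (X 0 0); apply/matrixP => i j; rewrite mxE.
by case: (ord2P i) => ->; case: (ord2P j) => ->.
Qed.

Lemma sigma_mx_lower0 X Y : X 1 0 = 0 ->
  sigma_mx X Y = - (Y 1 0 * eigen_cross Y (upper_eigvec X)).
Proof.
move=> X10; rewrite /sigma_mx /tau_mx /eigen_cross !mxtrace2 !mulmx2E !mxE /= X10.
by field.
Qed.

Lemma skew_tr_lower0 X Y Z : X 1 0 = 0 -> Z 1 0 = 0 ->
  (X 1 1 - X 0 0) * skew_tr X Y Z = Y 1 0 * eigen_cross Z (upper_eigvec X).
Proof.
move=> X10 Z10; rewrite /skew_tr /eigen_cross !mxtrace2 !mulmx2E !mxE /= X10 Z10.
by ring.
Qed.

Lemma sigma_mx_upper X Y : X 1 0 = 0 -> Y 1 0 = 0 -> sigma_mx X Y = 0.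
Proof. by move=> X10 Y10; rewrite sigma_mx_lower0 // Y10 mul0r oppr0. Qed.

Lemma skew_tr_upper X Y Z : X 1 0 = 0 -> Y 1 0 = 0 -> Z 1 0 = 0 ->
  skew_tr X Y Z = 0.
Proof.
by move=> X10 Y10 Z10; rewrite /skew_tr !mxtrace2 !mulmx2E X10 Y10 Z10; ring.
Qed.

Lemma common_eigenvector_lower0_nonscalar n (B : 'I_n -> 'M[F]_2) j0 :
  B j0 1 0 = 0 -> ~~ is_scalar_mx (B j0) ->
  (forall k, sigma_mx (B j0) (B k) = 0) ->
  (forall k l, skew_tr (B j0) (B k) (B l) = 0) -> common_eigenvector B.
Proof.
set X := B j0; set u := upper_eigvec X => X10 Xns hs hd.
have hsig k : B k 1 0 = 0 \/ eigen_cross (B k) u = 0.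
  have /eqP := hs k; rewrite sigma_mx_lower0 // oppr_eq0 mulf_eq0.
  by case/orP=> /eqP; [left | right].
have [/forallP h10 | /forallPn[k k10]] := boolP [forall k, B k 1 0 == 0].
  by apply: common_eigenvector_lower0 => k; apply/eqP.
have uk : eigen_cross (B k) u = 0 by case: (hsig k) => // /eqP; rewrite (negbTE k10).
have dX : X 1 1 - X 0 0 != 0.
  apply/eqP => d0.
  have X01 : X 0 1 != 0.
    by apply: contra (upper_eigvec_neq0 X10 Xns); rewrite col2_eq0 d0 eqxx andbT.
  have : eigen_cross (B k) u = - (B k 1 0 * X 0 1 ^+ 2).
    by rewrite /eigen_cross /u !mulmx2E !mxE /= d0; ring.
  rewrite uk => /eqP; rewrite eq_sym oppr_eq0 mulf_eq0 expf_eq0.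
  by rewrite (negbTE k10) (negbTE X01).
exists u => [|l]; first exact: upper_eigvec_neq0.
apply: eigenvector_cross; first exact: upper_eigvec_neq0.
have [l10|//] := hsig l.
have := skew_tr_lower0 (B k) X10 l10; rewrite hd mulr0 => /esym/eqP.
by rewrite mulf_eq0 (negbTE k10) => /eqP.
Qed.

Lemma common_eigenvector_invariants n (A : 'I_n -> 'M[F]_2) :
  common_eigenvector A <->
  forall j k l, sigma_mx (A j) (A k) = 0 /\ skew_tr (A j) (A k) (A l) = 0.
Proof.
split=> [/common_eigenvector_triangularizable[P hP hA] j k l | h0].
  rewrite -(sigma_mx_conj _ _ hP) -(skew_tr_conj _ _ _ hP).
  by rewrite sigma_mx_upper ?skew_tr_upper.
have [/forallP hsc | /forallPn[j0 hj0]] := boolP [forall i, is_scalar_mx (A i)].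
  apply: common_eigenvector_lower0 => i.
  by have /is_scalar_mxP[a ->] := hsc i; rewrite mxE.
have [u un [l hl]] := eigenvector_exists (A j0).
pose P := invmx (frame_mx u).
have hP : P \in unitmx by rewrite unitmx_inv frame_mx_unit.
apply: (common_eigenvector_conj hP (@common_eigenvector_lower0_nonscalar _ _ j0 _ _ _ _)).
- by rewrite /P invmxK (frame_mx_conj_lower0 un hl).
- apply: contra hj0 => /is_scalar_mxP[a ha]; apply/is_scalar_mxP; exists a.
  have -> : A j0 = invmx P *m (P *m A j0 *m invmx P) *m P.
    by rewrite !mulmxA mulVmx // mul1mx mulmxKV.
  by rewrite ha scalar_mxC -mulmxA mulVmx // mulmx1.
- by move=> k; rewrite sigma_mx_conj //; case: (h0 j0 k k).
- by move=> k l'; rewrite skew_tr_conj //; case: (h0 j0 k l').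
Qed.

End TraceInvariants.

Lemma continuous_ptws (X T : topologicalType) (I : Type) (f : X -> {ptws I -> T}) :
  (forall i, continuous (fun x => f x i)) -> continuous f.
Proof.
move=> hf x; apply/cvg_sup => i.
exact: (@continuous_comp_initial _ X _ (fun g : I -> T => g i) f (hf i) x).
Qed.

Section ComplexContinuity.
Variables (R : realType) (X : topologicalType).
Local Notation C := R[i].
Implicit Types f g : X -> C.

(* The library states these for the normed module [C^o], whose topology [C] shares. *)
Lemma continuousC_add f g :
  continuous f -> continuous g -> continuous (fun x => f x + g x).
Proof. by move=> hf hg x; exact: (@continuousD C C^o X f g x (hf x) (hg x)). Qed.

Lemma continuousC_mul f g :
  continuous f -> continuous g -> continuous (fun x => f x * g x).
Proof. by move=> hf hg x; exact: (@continuousM C X f g x (hf x) (hg x)). Qed.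

Lemma continuousC_opp f : continuous f -> continuous (fun x => - f x).
Proof. by move=> hf x; exact: (@continuousN C C^o X f x (hf x)). Qed.

Lemma continuousC_norm f : continuous f -> continuous (fun x => `|f x| : C).
Proof.
by move=> hf x; exact: (continuous_comp (hf x) (@norm_continuous C C^o (f x))).
Qed.

Lemma continuous_mx m n (F : X -> 'M[C]_(m, n)) :
  (forall i j, continuous (fun x => F x i j)) -> continuous F.
Proof.
move=> hF x; apply/cvg_ballP => e e0.
have : \forall y \near x, forall i j, ball (F x i j) e (F y i j).
  apply: filter_forall => i; apply: filter_forall => j.
  by have /cvg_ballP := hF i j x; apply.
by apply: filterS => y hy; split.
Qed.

Lemma continuous_mx_entry m n (F : X -> 'M[C]_(m, n)) i j :
  continuous F -> continuous (fun x => F x i j).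
Proof.
move=> hF x; apply: (@continuous_comp _ _ _ F (fun M : 'M[C]_(m, n) => M i j)).
  exact: hF.
exact: coord_continuous.
Qed.

Lemma continuous_mulmx2 (F G : X -> 'M[C]_2) :
  continuous F -> continuous G -> continuous (fun x => F x *m G x).
Proof.
move=> hF hG; apply: continuous_mx => i j.
under eq_fun do rewrite mulmx2E.
by apply: continuousC_add; apply: continuousC_mul; exact: continuous_mx_entry.
Qed.

Lemma continuous_adj2 (F : X -> 'M[C]_2) :
  continuous F -> continuous (fun x => \adj (F x)).
Proof.
move=> hF; apply: continuous_mx => i j; under eq_fun do rewrite adj_mx2.
by case: (i == 0); case: (j == 0);
  do ?apply: continuousC_opp; exact: continuous_mx_entry.
Qed.

Lemma continuous_det2 (F : X -> 'M[C]_2) :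
  continuous F -> continuous (fun x => \det (F x)).
Proof.
move=> hF; under eq_fun do rewrite det_mx2.
apply: continuousC_add; last apply: continuousC_opp;
  by apply: continuousC_mul; exact: continuous_mx_entry.
Qed.

End ComplexContinuity.

Section EntryNorm.
Variable R : realType.
Local Notation C := R[i].
Implicit Types M N : 'M[C]_2.

Definition mnorm M : C := \sum_i \sum_j `|M i j|.

Lemma mnormE M : mnorm M = `|M 0 0| + `|M 0 1| + (`|M 1 0| + `|M 1 1|).
Proof. by rewrite /mnorm !big_ord2. Qed.

Lemma mnorm_ge0 M : 0 <= mnorm M.
Proof. by rewrite mnormE !addr_ge0. Qed.

Lemma ler_entry_mnorm M i j : `|M i j| <= mnorm M.
Proof.
apply: le_trans (_ : \sum_j `|M i j| <= _).
  by rewrite (bigD1 j) //= lerDl sumr_ge0.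
by rewrite /mnorm [leRHS](bigD1 i) //= lerDl sumr_ge0 // => k _; rewrite sumr_ge0.
Qed.

Lemma mnormD M N : mnorm (M + N) <= mnorm M + mnorm N.
Proof.
rewrite /mnorm -big_split /=; apply: ler_sum => i _.
by rewrite -big_split /=; apply: ler_sum => j _; rewrite mxE ler_normD.
Qed.

Lemma mnormZ (a : C) M : mnorm (a *: M) = `|a| * mnorm M.
Proof. by rewrite !mnormE !mxE !normrM; ring. Qed.

Lemma mnormN M : mnorm (- M) = mnorm M.
Proof. by rewrite -scaleN1r mnormZ normrN1 mul1r. Qed.

Lemma mnorm1 : mnorm 1%:M = 2.
Proof. by rewrite mnormE !mxE /= normr1 normr0 addr0 add0r. Qed.

Lemma mnormM M N : mnorm (M *m N) <= mnorm M * mnorm N.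
Proof.
rewrite /mnorm mulr_suml; apply: ler_sum => i _.
apply: le_trans (_ : \sum_j \sum_k `|M i k| * `|N k j| <= _).
  apply: ler_sum => j _; rewrite mxE; apply: le_trans (ler_norm_sum _ _ _) _.
  by under eq_bigr do rewrite normrM.
rewrite exchange_big mulr_suml; apply: ler_sum => k _ /=.
rewrite -mulr_sumr ler_wpM2l // [leRHS](bigD1 k) //= lerDl.
by apply: sumr_ge0 => k' _; exact: sumr_ge0.
Qed.

Lemma continuous_mnorm (X : topologicalType) (F : X -> 'M[C]_2) :
  continuous F -> continuous (fun x => mnorm (F x)).
Proof.
move=> hF; under eq_fun do rewrite mnormE.
by do !apply: continuousC_add; apply: continuousC_norm; exact: continuous_mx_entry.
Qed.

End EntryNorm.

Section Compactness.
Variable R : realType.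
Local Notation C := R[i].

Lemma compact_norm_bounded (X : ptopologicalType) (A : set X) (h : X -> C) :
  compact A -> continuous h -> exists N : nat, forall x, A x -> `|h x| < N%:R.
Proof.
rewrite compact_cover => cA hh.
pose U (k : nat) := h @^-1` [set z : C | `|z| < k.+1%:R].
have U_open k : [set: nat] k -> open (U k).
  move=> _; move/continuousP : hh; apply.
  have -> : [set z : C | `|z| < k.+1%:R] = ball (0 : C) k.+1%:R.
    by apply/seteqP; split => z; rewrite /ball /= sub0r normrN.
  exact: (@ball_open _ C^o).
have normE x : `|h x| = ((complex.Re `|h x|)%:C)%C by rewrite RRe_real ?normr_real.
have A_U : A `<=` \bigcup_(k in [set: nat]) U k.
  move=> x _; set t := complex.Re `|h x|.
  have t0 : 0 <= t by rewrite -lecR /t -normE normr_ge0.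
  exists (Num.Def.archi_bound t) => //=.
  rewrite /U /= normE -[_.+1%:R](rmorph_nat (real_complex R)) ltcR.
  by apply: lt_le_trans (archi_boundP t0) _; rewrite ler_nat.
have [D _ hD] := cA _ _ _ U_open A_U.
exists (\max_(k <- finmap.enum_fset D) k).+1 => x /hD [k hk /= hkx].
by apply: lt_le_trans hkx _; rewrite ler_nat ltnS leq_bigmax_seq.
Qed.

Definition csquare (r : R) : set C :=
  [set z | `|complex.Re z| <= r /\ `|complex.Im z| <= r].

Lemma continuous_real_complex : continuous (fun x : R => (x%:C)%C).
Proof.
move=> x; apply/cvg_ballP => e; rewrite ltcE /= => /andP[/eqP eI eR].
apply: filterS (nbhsx_ballx x _ eR) => y; rewrite /ball /= -rmorphB ltcE /= eI.
by rewrite eqxx expr0n addr0 sqrtr_sqr.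
Qed.

Lemma compact_csquare r : compact (csquare r).
Proof.
pose Q := [set v : 'rV[R]_2 | forall i, `[-r, r]%classic (v ord0 i)].
pose phi (v : 'rV[R]_2) : C := ((v ord0 0)%:C + 'i * (v ord0 1)%:C)%C.
have phiE (a b : R) : ((a%:C + 'i * b%:C)%C : C) = (a +i* b)%C.
  by rewrite [RHS]complexE.
have -> : csquare r = phi @` Q.
  apply/seteqP; split=> [z [hr hi] | _ [v hv <-]].
    exists (\row_(i < 2) if i == 0 then complex.Re z else complex.Im z).
      by move=> i; rewrite /= in_itv /= -ler_norml mxE; case: (ord2P i) => ->.
    by rewrite /phi !mxE /= phiE; case: z {hr hi}.
  rewrite /csquare /phi phiE /=.
  by split; rewrite ler_norml; have := hv 0; have := hv 1; rewrite /= !in_itv.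
apply: continuous_compact; last exact: rV_compact (fun=> @segment_compact R (-r) r).
apply: continuous_subspaceT.
have coordC (i : 'I_2) : continuous (fun v : 'rV[R]_2 => ((v ord0 i)%:C)%C).
  move=> w; exact: continuous_comp (@coord_continuous R 1 2 ord0 i w)
    (@continuous_real_complex (w ord0 i)).
apply: continuousC_add; first exact: coordC.
by apply: continuousC_mul; [exact: cst_continuous | exact: coordC].
Qed.

Lemma csquare_norm (z rho : C) : 0 <= rho -> `|z| <= rho -> csquare (complex.Re rho) z.
Proof.
move=> r0; rewrite -(RRe_real (ger0_real r0)) normc_def lecR => h.
case: z h => a b /= h; split; apply: le_trans h; rewrite -sqrtr_sqr ler_wsqrtr //.
  by rewrite lerDl sqr_ge0.
by rewrite lerDr sqr_ge0.
Qed.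

Definition mx_box (r : R) : set 'M[C]_2 := [set M | forall i j, csquare r (M i j)].

Lemma compact_mx_box r : compact (mx_box r).
Proof.
have -> : mx_box r = vec_mx @` [set v : 'rV[C]_(2 * 2) | forall k, csquare r (v ord0 k)].
  apply/seteqP; split=> [M hM | _ [v hv <-] i j]; last by rewrite mxE.
  exists (mxvec M); last exact: mxvecK.
  by move=> k; case: (mxvec_indexP k) => i j; rewrite mxvecE.
apply: continuous_compact; last exact: (@rV_compact C _ _ (fun=> @compact_csquare r)).
apply/continuous_subspaceT/continuous_mx => i j.
under eq_fun do rewrite mxE.
exact: coord_continuous.
Qed.

Lemma compact_ptws_box n r :
  compact [set B : {ptws 'I_n -> 'M[C]_2} | forall i, mx_box r (B i)].
Proof. exact: tychonoff (fun _ => @compact_mx_box r). Qed.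

End Compactness.

Section Stability.
Variable R : realType.
Local Notation C := R[i].
Implicit Types (g M P X Y : 'M[C]_2).

Lemma SL2_unit g : \det g = 1 -> g \in unitmx.
Proof. by move=> g1; rewrite unitmxE g1 unitr1. Qed.

Lemma invmx_SL2 g : \det g = 1 -> invmx g = \adj g.
Proof. by move=> g1; rewrite /invmx SL2_unit // g1 invr1 scale1r. Qed.

Definition flip2 (a : 'I_2) : 'I_2 := if a == 0 then 1 else 0.

Lemma norm_conj_delta_mx g x a : \det g = 1 ->
  `|(g *m delta_mx a (flip2 a) *m invmx g) x (flip2 x)| = `|g x a| ^+ 2.
Proof.
move=> g1; rewrite invmx_SL2 //.
have -> : (g *m delta_mx a (flip2 a) *m \adj g) x (flip2 x) =
    (if x == a then 1 else -1) * g x a ^+ 2.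
  by case: (ord2P x) => ->; case: (ord2P a) => ->;
    rewrite !mulmx2E !adj_mx2 !mxE /=; ring.
by rewrite normrM normrX; case: (x == a); rewrite ?normrN normr1 mul1r.
Qed.

Lemma ler_sqr_1add (u G : C) : 0 <= u -> u ^+ 2 <= G -> u <= 1 + G.
Proof.
move=> u0 uG; have G0 : 0 <= G := le_trans (exprn_ge0 2 u0) uG.
have /orP[u1|u1] := real_leVge (ger0_real u0) (@real1 C).
  by apply: le_trans u1 _; rewrite lerDl.
apply: le_trans (_ : G <= 1 + G); last by rewrite lerDr.
by apply: le_trans uG; rewrite expr2 -{1}[u]mul1r ler_wpM2r.
Qed.

Lemma conj_SL2_bounded_span P1 P2 P3 E (beta : C) :
  skew_tr P1 P2 P3 != 0 -> 0 <= beta ->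
  exists2 c : C, 0 <= c & forall g, \det g = 1 ->
    mnorm (g *m P1 *m invmx g) <= beta -> mnorm (g *m P2 *m invmx g) <= beta ->
    mnorm (g *m P3 *m invmx g) <= beta -> mnorm (g *m E *m invmx g) <= c.
Proof.
move=> d0 b0; set d := skew_tr P1 P2 P3.
have [c0 [c1 [c2 [c3 E_eq]]]] : exists c0 c1 c2 c3 : C,
    (2 * d) *: E = c0 *: 1%:M + c1 *: P1 + c2 *: P2 + c3 *: P3.
  by do 4!eexists; exact: skew_tr_expansion.
have d2_gt0 : 0 < `|2 * d| by rewrite normr_gt0 mulf_neq0 // pnatr_eq0.
exists ((`|c0| * 2 + (`|c1| + `|c2| + `|c3|) * beta) / `|2 * d|).
  by rewrite divr_ge0 // addr_ge0 // mulr_ge0 // ?addr_ge0.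
move=> g g1 h1 h2 h3; rewrite ler_pdivlMr // mulrC -mnormZ scalemxAl scalemxAr.
rewrite E_eq !mulmxDr !mulmxDl -!scalemxAr -!scalemxAl mulmx1 mulmxV ?SL2_unit //.
apply: le_trans (le_trans (mnormD _ _) (lerD (le_trans (mnormD _ _)
  (lerD (mnormD _ _) (lexx _))) (lexx _))) _.
rewrite !mnormZ mnorm1 !mulrDl -!addrA lerD2l.
by rewrite !lerD ?ler_wpM2l.
Qed.

Lemma conj_SL2_bounded_entries P1 P2 P3 (beta : C) :
  skew_tr P1 P2 P3 != 0 -> 0 <= beta ->
  exists2 gam : C, 0 <= gam & forall g, \det g = 1 ->
    mnorm (g *m P1 *m invmx g) <= beta -> mnorm (g *m P2 *m invmx g) <= beta ->
    mnorm (g *m P3 *m invmx g) <= beta -> forall x a, `|g x a| <= 1 + gam.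
Proof.
move=> d0 b0.
have [c c_ge0 hc] := conj_SL2_bounded_span (delta_mx 0 (flip2 0)) d0 b0.
have [c' c'_ge0 hc'] := conj_SL2_bounded_span (delta_mx 1 (flip2 1)) d0 b0.
exists (c + c') => [|g g1 h1 h2 h3 x a]; first exact: addr_ge0.
apply: ler_sqr_1add; first exact: normr_ge0.
rewrite -(norm_conj_delta_mx x a g1).
apply: le_trans (ler_entry_mnorm _ x (flip2 x)) _.
case: (ord2P a) => ->.
  by apply: le_trans (hc g g1 h1 h2 h3) _; rewrite lerDl.
by apply: le_trans (hc' g g1 h1 h2 h3) _; rewrite lerDr.
Qed.

Lemma no_common_eigenvector_skew_triple n (A : 'I_n -> 'M[C]_2) (rho : C) :
  0 <= rho -> ~ common_eigenvector A ->
  exists P1 P2 P3, skew_tr P1 P2 P3 != 0 /\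
    forall g, \det g = 1 -> (forall i, mnorm (g *m A i *m invmx g) <= rho) ->
    let beta := rho + 2 * rho ^+ 2 in
    [/\ mnorm (g *m P1 *m invmx g) <= beta, mnorm (g *m P2 *m invmx g) <= beta
       & mnorm (g *m P3 *m invmx g) <= beta].
Proof.
move=> rho0 nCE; have rho_beta : rho <= rho + 2 * rho ^+ 2.
  by rewrite lerDl mulr_ge0 ?exprn_ge0.
have : ~ forall j k l, sigma_mx (A j) (A k) = 0 /\ skew_tr (A j) (A k) (A l) = 0.
  by move/common_eigenvector_invariants.
rewrite -existsNE => -[j]; rewrite -existsNE => -[k]; rewrite -existsNE => -[l].
case/not_andP => [s0 | d0].
  exists (A j), (A k), (A j *m A k - A k *m A j); split.
    by rewrite skew_tr_commutator mulf_neq0 ?pnatr_eq0 //; apply/eqP.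
  move=> g g1 hA beta; split; rewrite ?(le_trans (hA _) rho_beta) //.
  have mnorm_mul_le X Y : mnorm X <= rho -> mnorm Y <= rho -> mnorm (X *m Y) <= rho ^+ 2.
    by move=> hX hY; rewrite (le_trans (mnormM _ _)) // expr2 ler_pM ?mnorm_ge0.
  rewrite mulmxBr mulmxBl -!(conj_mulmx _ _ (SL2_unit g1)).
  apply: le_trans (mnormD _ _) _; rewrite mnormN.
  apply: le_trans (lerD (mnorm_mul_le _ _ (hA j) (hA k))
                        (mnorm_mul_le _ _ (hA k) (hA j))) _.
  by rewrite -mulr2n -mulr_natl lerDr.
exists (A j), (A k), (A l); split; first by apply/eqP.
by move=> g g1 hA beta; split; apply: le_trans (hA _) rho_beta.
Qed.

Lemma compact_ptws_mnorm_bounded n (K : set {ptws 'I_n -> 'M[C]_2}) :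
  compact K -> exists2 rho : C, 0 <= rho & forall B, K B -> forall i, mnorm (B i) <= rho.
Proof.
move=> cK.
have hN i : exists N : nat, forall B, K B -> `|mnorm (B i)| < N%:R.
  have cKi : compact ((fun B : {ptws 'I_n -> 'M[C]_2} => B i) @` K).
    exact/continuous_compact/cK/continuous_subspaceT/proj_continuous.
  have [N hN] := compact_norm_bounded cKi (continuous_mnorm (fun M => cvg_id)).
  by exists N => B KB; apply: hN; exists B.
have [N {}hN] := choice hN.
exists (\max_i N i)%:R => [|B KB i]; first exact: ler0n.
rewrite -(ger0_norm (mnorm_ge0 (B i))).
by apply/ltW/(lt_le_trans (hN i B KB)); rewrite ler_nat leq_bigmax.
Qed.

Lemma closed_SL2 : closed (SL2 R).
Proof.
have C_separated : hausdorff_space C by exact: (@norm_hausdorff C C^o).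
have det_cont : continuous (fun g : 'M[C]_2 => \det g).
  by apply: continuous_det2 => g; exact: cvg_id.
exact: (continuous_closedP _).1 det_cont _
  (@accessible_closed_set1 _ (hausdorff_accessible C_separated) 1).
Qed.

Lemma closed_SL2_orbit_preimage n (A : Vn R n) (K : set (Vn R n)) :
  closed K -> closed (SL2 R `&` (fun g => conj_actV g A) @^-1` K).
Proof.
move=> cK; pose orbit g : Vn R n := fun i => g *m A i *m \adj g.
have -> : SL2 R `&` (fun g => conj_actV g A) @^-1` K = SL2 R `&` orbit @^-1` K.
  apply/seteqP; split=> g [g1 Kg]; split=> //=;
    by move: Kg; rewrite /= /conj_actV invmx_SL2.
apply: closedI closed_SL2 _; apply: (continuous_closedP _).1 cK.
have g_cont : continuous (fun g : 'M[C]_2 => g) by move=> g; exact: cvg_id.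
apply: continuous_ptws => i; rewrite /orbit.
have Ai_cont : continuous (fun _ : 'M[C]_2 => A i) by move=> ?; exact: cst_continuous.
exact: continuous_mulmx2 (continuous_mulmx2 g_cont Ai_cont) (continuous_adj2 g_cont).
Qed.

Lemma no_common_eigenvector_stable n (A : Vn R n) :
  ~ common_eigenvector A -> stableV A.
Proof.
move=> nCE K cK.
have [rho rho0 K_rho] := compact_ptws_mnorm_bounded cK.
have [P1 [P2 [P3 [d0 hP]]]] := no_common_eigenvector_skew_triple rho0 nCE.
have beta0 : 0 <= rho + 2 * rho ^+ 2 by rewrite addr_ge0 ?mulr_ge0 ?exprn_ge0.
have [gam gam0 g_bounded] := conj_SL2_bounded_entries d0 beta0.
have K_closed : closed K.
  by apply: compact_closed cK; apply: hausdorff_product => _; exact: norm_hausdorff.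
have S_box : SL2 R `&` (fun g => conj_actV g A) @^-1` K `<=`
    mx_box (complex.Re (1 + gam)).
  move=> g [g1 Kg] x a; apply: csquare_norm; first by rewrite addr_ge0.
  have := K_rho _ Kg; rewrite /conj_actV => /(hP g g1)[h1 h2 h3].
  exact: g_bounded.
exact: subclosed_compact (closed_SL2_orbit_preimage K_closed)
  (@compact_mx_box R _) S_box.
Qed.

Definition diag2 (a b : C) : 'M[C]_2 :=
  \matrix_(i, j) if i == j then (if i == 0 then a else b) else 0.

Lemma diag2M a b c d : diag2 a b *m diag2 c d = diag2 (a * c) (b * d).
Proof.
apply/matrixP => i j; rewrite mulmx2E !mxE.
by case: (ord2P i) => ->; case: (ord2P j) => -> /=; ring.
Qed.

Lemma diag2_11 : diag2 1 1 = 1%:M.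
Proof.
by apply/matrixP => i j; rewrite !mxE; case: (ord2P i) => ->; case: (ord2P j) => ->.
Qed.

Lemma det_diag2 a b : \det (diag2 a b) = a * b.
Proof. by rewrite det_mx2 !mxE /= mulr0 subr0. Qed.

Lemma diag2_split a b : diag2 a b = a *: diag2 1 0 + b *: diag2 0 1.
Proof.
apply/matrixP => i j; rewrite !mxE.
by case: (ord2P i) => ->; case: (ord2P j) => -> /=; ring.
Qed.

Lemma mnorm_conj_diag2_upper (s : C) X : s != 0 -> `|s| <= 1 -> X 1 0 = 0 ->
  mnorm (diag2 s s^-1 *m X *m diag2 s^-1 s) <= mnorm X.
Proof.
move=> s0 s1 X10; set Y := diag2 s s^-1 *m X *m diag2 s^-1 s.
have [Y00 Y01 Y10 Y11] : [/\ Y 0 0 = X 0 0, Y 0 1 = s ^+ 2 * X 0 1,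
    Y 1 0 = 0 & Y 1 1 = X 1 1].
  by split; rewrite /Y !mulmx2E !mxE /= ?X10; field.
rewrite !mnormE Y00 Y01 Y10 Y11 normr0 normrM normrX.
apply: lerD; first apply: lerD => //.
  by apply: ler_piMl => //; apply: exprn_ile1.
by apply: lerD.
Qed.

Lemma mnorm_scale_pair_unbounded M1 M2 (N : C) : M2 != 0 -> 0 <= N ->
  exists2 s : C, 0 < s <= 1 & N <= mnorm (s *: M1 + s^-1 *: M2).
Proof.
move=> M2n0 N0; set m1 := mnorm M1; set m2 := mnorm M2.
have m1_ge0 : 0 <= m1 := mnorm_ge0 M1.
have m2_gt0 : 0 < m2.
  rewrite lt_def mnorm_ge0 andbT; apply: contra M2n0 => /eqP m20.
  apply/eqP/matrixP => i j; rewrite mxE; apply/eqP.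
  by rewrite -normr_le0 -m20 ler_entry_mnorm.
set c := N + m1 + m2; have c_gt0 : 0 < c by rewrite ltr_wpDl ?addr_ge0.
have s_gt0 : 0 < m2 / c by rewrite divr_gt0.
have s_le1 : m2 / c <= 1 by rewrite ler_pdivrMr // mul1r lerDr addr_ge0.
exists (m2 / c); first by rewrite s_gt0.
set s := m2 / c; set g := s *: M1 + s^-1 *: M2.
have c_le : c <= m1 + mnorm g.
  have -> : c = mnorm (s^-1 *: M2).
    by rewrite mnormZ gtr0_norm ?invr_gt0 // invf_div divfK ?lt0r_neq0.
  rewrite -[s^-1 *: M2](addKr (s *: M1)); apply: le_trans (mnormD _ _) _.
  by rewrite mnormN mnormZ gtr0_norm // lerD2r ler_piMl.
apply: le_trans (_ : N <= N + m2) _; first by rewrite lerDl ltW.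
by rewrite -(lerD2l m1) addrA [m1 + N]addrC.
Qed.

Lemma common_eigenvector_not_stable n (A : Vn R n) :
  common_eigenvector A -> ~ stableV A.
Proof.
case/common_eigenvector_triangularizable => P P_unit B_upper stA.
set B := fun i => P *m A i *m invmx P.
pose g s := invmx P *m diag2 s s^-1 *m P.
have g_SL2 s : s != 0 -> \det (g s) = 1 /\
    invmx (g s) = invmx P *m diag2 s^-1 s *m P.
  move=> s0; have gg : g s *m (invmx P *m diag2 s^-1 s *m P) = 1%:M.
    rewrite /g -!mulmxA (mulmxA P) mulmxV // mul1mx (mulmxA (diag2 _ _)).
    by rewrite diag2M mulfV // mulVf // diag2_11 mul1mx mulVmx.
  split; last first.
    by rewrite -[invmx _]mulmx1 -gg mulmxA mulVmx ?mul1mx // (mulmx1_unit gg).1.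
  have detP : \det P != 0 by rewrite -unitfE -unitmxE.
  by rewrite /g !det_mulmx det_inv det_diag2 mulfV // mulr1 mulVf.
pose rho := mnorm (invmx P) * (\sum_k mnorm (B k)) * mnorm P.
have rho_ge0 : 0 <= rho.
  by rewrite !mulr_ge0 ?mnorm_ge0 ?sumr_ge0 // => k _; exact: mnorm_ge0.
pose K := [set A' : Vn R n | forall i, mx_box (complex.Re rho) (A' i)].
have [N N_bound] := compact_norm_bounded (stA K (@compact_ptws_box R n _))
  (continuous_mnorm (fun g => cvg_id)).
have S_g s : 0 < s <= 1 -> (SL2 R `&` (fun g => conj_actV g A) @^-1` K) (g s).
  case/andP=> s_gt0 s_le1; have s0 : s != 0 by rewrite gt_eqF.
  have [g1 g_inv] := g_SL2 s s0; split=> //= i x y; apply: csquare_norm => //.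
  have -> : conj_actV (g s) A i = invmx P *m (diag2 s s^-1 *m B i *m diag2 s^-1 s) *m P.
    by rewrite /conj_actV g_inv /g /B !mulmxA.
  apply: le_trans (ler_entry_mnorm _ x y) _.
  apply: le_trans (mnormM _ _) _; rewrite ler_wpM2r ?mnorm_ge0 //.
  apply: le_trans (mnormM _ _) _; rewrite ler_wpM2l ?mnorm_ge0 //.
  apply: le_trans (mnorm_conj_diag2_upper s0 _ (B_upper i)) _.
    by rewrite gtr0_norm.
  by rewrite [leRHS](bigD1 i) //= lerDl sumr_ge0 // => k _; exact: mnorm_ge0.
have M2n0 : invmx P *m diag2 0 1 *m P != 0.
  apply/eqP => /(congr1 (fun M => (P *m M *m invmx P) 1 1)).
  rewrite !mulmxA mulmxV // mul1mx mulmxK // mulmx0 mul0mx !mxE /=.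
  by move/eqP; rewrite oner_eq0.
have [s s_01 N_le] := mnorm_scale_pair_unbounded (invmx P *m diag2 1 0 *m P)
  M2n0 (ler0n _ N).
have := N_bound _ (S_g s s_01); rewrite (ger0_norm (mnorm_ge0 _)) /g diag2_split.
rewrite mulmxDr mulmxDl -!scalemxAr -!scalemxAl.
by move/(le_lt_trans N_le); rewrite ltxx.
Qed.

Lemma stable_no_common_eigenvector n (A : Vn R n) :
  stableV A <-> ~ common_eigenvector A.
Proof.
split=> [stA ce | ]; last exact: no_common_eigenvector_stable.
exact: common_eigenvector_not_stable ce stA.
Qed.

End Stability.

Lemma similar_upper_tri_common_eigenvector (R : realType) n (A : Vn R n) :
  (exists B, similarV A B /\ upper_tri_tupleV B) <-> common_eigenvector A.
Proof.
have lift00 : lift ord0 ord0 = 1 :> 'I_2 by exact/val_inj.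
rewrite /upper_tri_tupleV /upper_tri2V lift00; split.
  case=> _ [[P P_unit <-] B_upper].
  by apply/common_eigenvector_triangularizable; exists P.
case/common_eigenvector_triangularizable => P P_unit B_upper.
by exists (conj_actV P A); split=> //; exists P.
Qed.

Lemma no_common_eigenvector_invariants (R : realType) n (A : Vn R n) :
  ~ common_eigenvector A <->
  exists j k l, sigmaV A j k != 0 \/ DeltaV A j k l != 0.
Proof.
rewrite /DeltaV; split.
  move=> nCE; apply: contrapT => no_witness; apply/nCE/common_eigenvector_invariants.
  move=> j k l; split; apply/eqP; apply: contrapT => h; apply: no_witness.
    by exists j, k, l; left; apply/negP.
  by exists j, k, l; right; rewrite expf_neq0 //; apply/negP.
case=> j [k [l h]] /common_eigenvector_invariants/(_ j k l)[s0 d0].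
case: h => /negP; apply; apply/eqP; first exact: s0.
by change (skew_tr (A j) (A k) (A l) ^+ 2 = 0); rewrite d0 expr0n.
Qed.

Lemma stable_triple (R : realType) n (A : Vn R n) :
  stableV A <-> exists j k l, stableV (tripleV (A j) (A k) (A l)).
Proof.
split.
  move/stable_no_common_eigenvector/no_common_eigenvector_invariants => [j [k [l h]]].
  exists j, k, l; apply/stable_no_common_eigenvector/no_common_eigenvector_invariants.
  by exists 0, 1, 2.
case=> j [k [l /stable_no_common_eigenvector nCE]].
apply/stable_no_common_eigenvector => -[u u_neq0 hu]; apply: nCE.
exists u => // i; rewrite /tripleV (tnth_nth 0) /=.
by case: i => [[|[|[|//]]] ?] /=; apply: hu.
Qed.

Theorem theorem3p3 (R : realType) (n : nat) (A : Vn R n) :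
  (0 < n)%N ->
  [/\ (stableV A <->
        exists j k l : 'I_n, stableV (tripleV (A j) (A k) (A l))),
      (stableV A <->
        exists j k l : 'I_n, sigmaV A j k != 0 \/ DeltaV A j k l != 0),
      (stableV A <->
        ~ exists B : {ptws 'I_n -> 'M[R[i]]_2}, similarV A B /\ upper_tri_tupleV B)
    & (stableV A <->
        ~ exists W : 'M[R[i]]_2,
            [/\ (0 < \rank W)%N, (\rank W < 2)%N & forall i, preservesV (A i) W])].
Proof.
move=> _; have stA := stable_no_common_eigenvector A.
split.
- exact: stable_triple.
- exact: iff_trans stA (no_common_eigenvector_invariants A).
- apply: iff_trans stA (not_iff_compat _).
  exact: iff_sym (similar_upper_tri_common_eigenvector A).
- apply: iff_trans stA (not_iff_compat _).
  exact: iff_sym (invariant_line_common_eigenvector A).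
Qed.
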